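(* Let $k$ be a field and let $A$ be a graded Artinian $k$-algebra with a strong Lefschetz element $\ell\in A_1$. Then for every integer $j>0$, the algebra $A/[0:(\ell^j)]$ has the strong Lefschetz property, with (the image of) $\ell$ as a strong Lefschetz element.
   Context: A graded Artinian $k$-algebra $A$ has the strong Lefschetz property (SLP) if there exists $\ell\in A_1$ such that for all integers $i$ and $j\ge 0$ the multiplication map $\cdot\ell^j\colon A_i\to A_{i+j}$ has maximal rank (is injective or surjective); such $\ell$ is called a strong Lefschetz element. Here $0:(\ell^j)=\{a\in A\mid a\ell^j=0\}$. *)

From HB Require Import structures.
From mathcomp Require Import all_boot all_order all_algebra all_field.
Set Implicit Arguments. Unset Strict Implicit. Unset Printing Implicit Defensive.
Import GRing.Theory.
Local Open Scope ring_scope.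
Local Open Scope vspace_scope.

Definition is_grading (K : fieldType) (A : falgType K) (G : nat -> {vspace A}) : Prop :=
  (exists N : nat,
      (forall i, (N <= i)%N -> G i = 0%VS) /\
      (\sum_(i < N) G i)%VS = fullv /\
      directv (\sum_(i < N) G i)%VS) /\
  (forall i j : nat, (G i * G j <= G (i + j)%N)%VS).

(* Graded Artinian K-algebra: commutative, finite-dimensional over K (built into
   falgType), graded, with A_0 = K (the line spanned by 1). *)
Definition graded_artinian (K : fieldType) (A : falgType K) (G : nat -> {vspace A}) : Prop :=
  (forall x y : A, (x * y)%R = (y * x)%R) /\ is_grading G /\ G 0%N = 1%VS.

Definition max_rank_mul (K : fieldType) (A : falgType K) (G : nat -> {vspace A})
  (l : A) (i j : nat) : Prop :=
  (lker (amull (l ^+ j)%R) :&: G i = 0)%VS \/ (amull (l ^+ j)%R @: G i = G (i + j)%N)%VS.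

Definition strong_lefschetz_element (K : fieldType) (A : falgType K)
  (G : nat -> {vspace A}) (l : A) : Prop :=
  l \in G 1%N /\ forall i j : nat, max_rank_mul G l i j.

Definition in_colon0 (K : fieldType) (A : falgType K) (l : A) (j : nat) (a : A) : bool :=
  ((a * l ^+ j)%R == 0)%R.

From HB Require Import structures.
From mathcomp Require Import all_boot all_order all_algebra all_field.
Local Open Scope vspace_scope.
Local Open Scope ring_scope.
Import GRing.Theory.

(* Write B = A/[0:(l^j)] and pi for the projection. Since pi a = 0 exactly when
   a l^j = 0, commutativity gives pi (l^m a) = 0 iff l^(j+m) a = 0, so
   injectivity of l^(j+m) on A_i descends to injectivity of pi(l)^m on B_i.
   If instead l^(j+m) maps A_i onto A_(i+j+m), then every c in A_(i+m) has
   c l^j = l^(j+m) a = (l^m a) l^j for some a in A_i, whence pi c = pi (l^m a),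
   and pi(l)^m maps B_i onto B_(i+m). *)

Section Grading.

Variables (K : fieldType) (A : falgType K) (G : nat -> {vspace A}).
Hypothesis mulG : forall i j, (G i * G j <= G (i + j)%N)%VS.

Lemma memv_grading_expr (x : A) d m :
  G 0%N = 1%VS -> x \in G d -> x ^+ m \in G (d * m)%N.
Proof.
move=> G0 Gx; elim: m => [|m IHm]; first by rewrite expr0 muln0 G0 memv_line.
by rewrite exprS mulnS; apply: (subvP (mulG d (d * m))); apply: memv_mul.
Qed.

Lemma limg_amull_grading (x : A) d i :
  x \in G d -> (amull x @: G i <= G (d + i)%N)%VS.
Proof.
move=> Gx; apply/subvP => _ /memv_imgP [y Gy ->].
by rewrite lfunE; apply: (subvP (mulG d i)); apply: memv_mul.
Qed.

Lemma limg_amulr_grading (x : A) d i :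
  x \in G d -> (amulr x @: G i <= G (i + d)%N)%VS.
Proof.
by move=> Gx; rewrite limg_amulr (subv_trans _ (mulG i d)) // prodvSr // -memvE.
Qed.

End Grading.

Lemma ahom_amull (K : fieldType) (A B : falgType K) (pi : 'AHom(A, B)) (x : A) :
  (pi \o amull x = amull (pi x) \o pi)%VF.
Proof. by apply/lfunP => a; rewrite !comp_lfunE !lfunE /= rmorphM. Qed.

Section QuotientByColon.

Variables (K : fieldType) (A B : falgType K) (l : A) (j : nat).
Variable pi : 'AHom(A, B).
Hypothesis mulC : forall x y : A, x * y = y * x.
Hypothesis ker_pi : forall a : A, (pi a == 0) = in_colon0 l j a.

Lemma mul_exprD m a : l ^+ (j + m) * a = l ^+ m * a * l ^+ j.
Proof. by rewrite -mulrA [a * _]mulC mulrA -exprD addnC. Qed.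

Lemma eq_quotient a b : (pi a == pi b) = (a * l ^+ j == b * l ^+ j).
Proof. by rewrite -subr_eq0 -raddfB ker_pi /in_colon0 mulrBl subr_eq0. Qed.

Lemma quotient_mul_inj (V : {vspace A}) m :
  (lker (amull (l ^+ (j + m))%R) :&: V = 0)%VS ->
  (lker (amull (pi l ^+ m)%R) :&: (pi @: V) = 0)%VS.
Proof.
move=> inj; apply/eqP; rewrite -subv0; apply/subvP => b.
rewrite memv_cap andbC => /andP [/memv_imgP [a Va ->]].
rewrite memv_ker lfunE /= -rmorphXn -rmorphM ker_pi /in_colon0 -mul_exprD.
move=> la0.
have : a \in (lker (amull (l ^+ (j + m))%R) :&: V)%VS.
  by rewrite memv_cap memv_ker lfunE /= la0 Va.
by rewrite inj memv0 => /eqP ->; rewrite linear0 mem0v.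
Qed.

Lemma quotient_mul_onto (V W : {vspace A}) m :
  (amull (l ^+ m)%R @: V <= W)%VS ->
  (amulr (l ^+ j)%R @: W <= amull (l ^+ (j + m))%R @: V)%VS ->
  (amull (pi l ^+ m)%R @: (pi @: V) = pi @: W)%VS.
Proof.
move=> lV_W Wl_lV; rewrite -rmorphXn -limg_comp -ahom_amull limg_comp.
apply/eqP; rewrite eqEsubv limgS //=; apply/subvP => _ /memv_imgP [c Wc ->].
have /memv_imgP [a Va] := subvP Wl_lV _ (memv_img (amulr (l ^+ j)) Wc).
rewrite !lfunE /= mul_exprD => /eqP; rewrite -eq_quotient => /eqP ->.
have -> : l ^+ m * a = amull (l ^+ m) a by rewrite lfunE.
exact/memv_img/memv_img.
Qed.

End QuotientByColon.

Theorem mainTheorem4 (K : fieldType) (A : falgType K) (G : nat -> {vspace A}) (l : A)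
  (hA : graded_artinian G) (hl : strong_lefschetz_element G l)
  (j : nat) (hj : (0 < j)%N)
  (B : falgType K) (pi : 'AHom(A, B))
  (hsurj : limg pi = fullv)
  (hker : forall a : A, (pi a == 0%R) = in_colon0 l j a) :
  strong_lefschetz_element (fun i => pi @: G i) (pi l).
Proof.
case: hA => mulC [[_ mulG] G0]; case: hl => Gl max_rank.
have Glm m : l ^+ m \in G m by rewrite -{2}[m]mul1n memv_grading_expr.
split=> [|i m]; first exact: memv_img.
case: (max_rank i (j + m)%N) => [inj | onto]; [left | right].
  exact: quotient_mul_inj.
apply: quotient_mul_onto => //; first by rewrite addnC limg_amull_grading.
by rewrite onto addnA addnAC limg_amulr_grading.
Qed.
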